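(* Suppose Assumption 2 holds. Consider the $N$-armed system at time $t$ and suppose the OLC condition holds for the set of all $N$ arms, i.e. with $n=N$ and $z(s)=NX_t([N],s)$. If all $N$ arms take actions according to Optimal Local Control applied to $[N]$, then $$\mathbb E\big[X_{t+1}([N])-\mu^*\,\big|\,X_t\big]=(X_t([N])-\mu^* )\Phi .$$
   Context: Single-armed MDP $(\mathbb S,\mathbb A,P,r)$ with finite $\mathbb S$, $\mathbb A=\{0,1\}$, budget fraction $\alpha\in(0,1)$; in the $N$-armed system ($\alpha N$ integer) arms transition independently according to $P$ given their states and actions. $S_t(i)$ is the state of arm $i$ at time $t$; for $D\subseteq[N]$, $X_t(D)=(X_t(D,s))_s$ with $X_t(D,s)=\frac1N\#\{i\in D:S_t(i)=s\}$ (row vector). LP relaxation: maximize $\sum_{s,a}r(s,a)y(s,a)$ over $y\ge0$ subject to $\sum_sy(s,1)=\alpha$, $\sum_{s',a}y(s',a)P(s',a,s)=\sum_ay(s,a)$ for all $s$, $\sum_{s,a}y(s,a)=1$; $y^*$ is a fixed optimal solution. $\bar\pi^*(a|s)=y^*(s,a)/(y^*(s,0)+y^*(s,1))$ if the denominator is positive, else $1/2$; $P_{\bar\pi^*}(s,s')=\sum_a\bar\pi^*(a|s)P(s,a,s')$; $\mu^*(s)=y^*(s,0)+y^*(s,1)$ (row vector). Assumption 2: there is a unique state $\tilde s$ with $y^*(\tilde s,0)>0$, $y^*(\tilde s,1)>0$. $\Phi=P_{\bar\pi^*}-\mathbf 1^\top\mu^*-(c-\alpha\mathbf 1)^\top(P_1(\tilde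 s)-P_0(\tilde s))$ with $c=(\bar\pi^*(1|s))_s$, $P_a(\tilde s)=(P(\tilde s,a,s))_s$, $\mathbf 1$ the all-ones row vector. $S^+=\{s:y^*(s,1)>0,y^*(s,0)=0\}$, $S^-=\{s:y^*(s,1)=0,y^*(s,0)>0\}$, $S^\emptyset=\{s:y^*(s,1)=y^*(s,0)=0\}$. Randomized rounding of $c\ge0$: $\lceil c\rceil$ w.p. $c-\lfloor c\rfloor$, else $\lfloor c\rfloor$. Optimal Local Control (OLC) applied to a set of $n$ arms with $z(s)$ arms in state $s$, defined under the OLC condition $\sum_{s\neq\tilde s}\bar\pi^*(1|s)z(s)\le\alpha n-|S^\emptyset|-1$ and $\sum_{s\neq\tilde s}\bar\pi^*(0|s)z(s)\le(1-\alpha)n-|S^\emptyset|-1$: let $B$ be a randomized rounding of $\alpha n$; activate all arms in $S^+$, none in $S^-$, a randomized rounding of $z(s)/2$ arms in each $s\in S^\emptyset$, and arms in state $\tilde s$ so that exactly $B$ arms are active. *)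

From HB Require Import structures.
From mathcomp Require Import all_boot all_order all_algebra.
Set Implicit Arguments. Unset Strict Implicit. Unset Printing Implicit Defensive.
Import Order.TTheory GRing.Theory Num.Theory.
Local Open Scope ring_scope.

Section Defs.
Variables (R : archiRealFieldType) (S : finType).

(* single-armed kernel P s a s' ; actions: false = 0 (passive), true = 1 (active) *)
Definition stochastic (P : S -> bool -> S -> R) : Prop :=
  (forall s a s', 0 <= P s a s') /\ (forall s a, \sum_(s' : S) P s a s' = 1).

Definition lp_feasible (P : S -> bool -> S -> R) (alpha : R) (y : S -> bool -> R) : Prop :=
  [/\ (forall s a, 0 <= y s a),
      \sum_(s : S) y s true = alpha,
      (forall s, \sum_(s' : S) \sum_(a : bool) y s' a * P s' a s = \sum_(a : bool) y s a)
    & \sum_(s : S) \sum_(a : bool) y s a = 1].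

Definition lp_obj (r : S -> bool -> R) (y : S -> bool -> R) : R :=
  \sum_(s : S) \sum_(a : bool) r s a * y s a.

Definition lp_optimal P r alpha (y : S -> bool -> R) : Prop :=
  lp_feasible P alpha y /\ forall y', lp_feasible P alpha y' -> lp_obj r y' <= lp_obj r y.

Definition pibar (y : S -> bool -> R) (a : bool) (s : S) : R :=
  if 0 < y s false + y s true then y s a / (y s false + y s true) else 1 / 2.

Definition mustar (y : S -> bool -> R) (s : S) : R := y s false + y s true.

Definition Ppibar (P : S -> bool -> S -> R) y (s s' : S) : R :=
  \sum_(a : bool) pibar y a s * P s a s'.

Definition Phi P y (alpha : R) (st : S) (s s' : S) : R :=
  Ppibar P y s s' - mustar y s' - (pibar y true s - alpha) * (P st true s' - P st false s').

Definition Splus (y : S -> bool -> R) : pred S := fun s => (0 < y s true) && (y s false == 0).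
Definition Sminus (y : S -> bool -> R) : pred S := fun s => (y s true == 0) && (0 < y s false).
Definition Sempty (y : S -> bool -> R) : pred S := fun s => (y s true == 0) && (y s false == 0).

(* probability mass function of the randomized rounding of c >= 0, on nat *)
Definition rround_pmf (c : R) (k : nat) : R :=
  (if k%:Z == Num.floor c then 1 - (c - (Num.floor c)%:~R) else 0)
  + (if k%:Z == Num.ceil c then c - (Num.floor c)%:~R else 0).

Variable N : nat.
Definition config := {ffun 'I_N -> S}.
Definition actvec := {ffun 'I_N -> bool}.

Definition zcount (x : config) (s : S) : nat := #|[set i | x i == s]|.

Definition Xfrac (x : config) (s : S) : R := (zcount x s)%:R / N%:R.

Definition nactive_in (x : config) (u : actvec) (s : S) : nat :=
  #|[set i | (x i == s) && u i]|.
Definition nactive (u : actvec) : nat := #|[set i | u i]|.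

Definition olc_condition y (alpha : R) (st : S) (x : config) : Prop :=
  (\sum_(s : S | s != st) pibar y true s * (zcount x s)%:R
     <= alpha * N%:R - (#|Sempty y|)%:R - 1)
  /\ (\sum_(s : S | s != st) pibar y false s * (zcount x s)%:R
     <= (1 - alpha) * N%:R - (#|Sempty y|)%:R - 1).

Definition is_distr (T : finType) (pi : T -> R) : Prop :=
  (forall t, 0 <= pi t) /\ \sum_(t : T) pi t = 1.

Definition OLC_law y (alpha : R) (x : config) (pi : actvec -> R) : Prop :=
  [/\ is_distr pi,
      (forall u, pi u != 0 -> forall i,
          (Splus y (x i) -> u i = true) /\ (Sminus y (x i) -> u i = false)),
      (forall k, \sum_(u : actvec | nactive u == k) pi u = rround_pmf (alpha * N%:R) k)
    &
      (forall s, Sempty y s -> forall k,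
          \sum_(u : actvec | nactive_in x u s == k) pi u
            = rround_pmf ((zcount x s)%:R / 2) k)].

Definition trans_prob (P : S -> bool -> S -> R) (x : config) (u : actvec) (x' : config) : R :=
  \prod_(i : 'I_N) P (x i) (u i) (x' i).

Definition expected_next P (x : config) (pi : actvec -> R) (s' : S) : R :=
  \sum_(u : actvec) pi u * \sum_(x' : config) trans_prob P x u x' * Xfrac x' s'.

End Defs.

Arguments Xfrac {R S N} x s.
Arguments zcount {S N} x s.
Arguments olc_condition {R S N} y alpha st x.
Arguments OLC_law {R S N} y alpha x pi.
Arguments expected_next {R S N} P x pi s'.

From HB Require Import structures.
From mathcomp Require Import all_boot all_order all_algebra ring.
Import Order.TTheory GRing.Theory Num.Theory.
Set Implicit Arguments.
Unset Strict Implicit.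
Unset Printing Implicit Defensive.

Local Open Scope ring_scope.

(* Given the actions, arms move independently, so E[X_{t+1}(s')] is the average of
   P(S_t(i), a_i, s') over the arms; it depends on the actions only through the
   expected number of active arms in each state.  Under OLC this number is c(s) z(s)
   for every s <> s~ (all arms of S+ are active, none of S-, and half of those of S0
   in expectation), and the total is alpha N, so s~ receives alpha N - sum c(s) z(s).
   Hence E[X_{t+1}] = X Ppibar - (X c - alpha) (P_1(s~) - P_0(s~)).  As mustar is
   Ppibar-stationary and mustar c = alpha, subtracting mustar from X turns this into
   (X - mustar) Phi. *)

Lemma sum_ord_mul_if (R : pzRingType) (M : nat) (a : int) (v : R) :
  0 <= a -> a < M%:Z ->
  \sum_(k < M) k%:R * (if k%:Z == a then v else 0) = a%:~R * v.
Proof.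
case: a => [n|//] _; rewrite ltz_nat => lt_nM.
rewrite (bigD1 (Ordinal lt_nM)) //= eqxx big1 ?addr0 // => k neq_kn.
by rewrite eqz_nat ifN ?mulr0.
Qed.

Lemma expectation_nat_law (R : pzSemiRingType) (T : finType) (pi : T -> R)
    (g : T -> nat) (M : nat) :
  (forall t, g t < M)%N ->
  \sum_t pi t * (g t)%:R = \sum_(k < M) k%:R * \sum_(t | g t == k) pi t.
Proof.
move=> g_ltM; rewrite (partition_big (fun t => Ordinal (g_ltM t)) predT) //=.
apply: eq_bigr => k _; rewrite mulr_sumr; apply: eq_big => [t|t /eqP <-].
  by apply/eqP/eqP => [<-|gk]; last apply: val_inj.
by rewrite mulr_natl mulr_natr.
Qed.

Section RandomizedRounding.
Variable R : archiRealFieldType.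

Lemma rround_mean (c : R) (M : nat) : 0 <= c <= M%:R ->
  \sum_(k < M.+1) k%:R * rround_pmf c k = c.
Proof.
case/andP=> c_ge0 c_leM.
have c_floor_ge0 : 0 <= Num.floor c by rewrite floor_ge0.
have c_ceil_ge0 : 0 <= Num.ceil c by rewrite ceil_ge0 (lt_le_trans _ c_ge0) // ltrN10.
have ceil_ltM : Num.ceil c < M.+1%:Z by rewrite -addn1 PoszD ltzD1 ceil_le_int.
have floor_ltM : Num.floor c < M.+1%:Z by apply: le_lt_trans ceil_ltM; rewrite ceil_floor lerDl.
rewrite /rround_pmf; under eq_bigr do rewrite mulrDr.
rewrite big_split /= !sum_ord_mul_if // ceil_floor rmorphD /=.
case: (boolP (c \is a Num.int)) => [c_int|_] /=; last by ring.
by rewrite floorK // subrr subr0 mulr1 mulr0 addr0.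
Qed.

Lemma expectation_rround (T : finType) (pi : T -> R) (g : T -> nat) (c : R) (M : nat) :
  (forall t, g t <= M)%N -> 0 <= c <= M%:R ->
  (forall k, \sum_(t | g t == k) pi t = rround_pmf c k) ->
  \sum_t pi t * (g t)%:R = c.
Proof.
move=> g_leM c_bd law; rewrite (expectation_nat_law _ (M := M.+1)) //.
by under eq_bigr do rewrite law; exact: rround_mean.
Qed.

End RandomizedRounding.

Lemma sum_card_fibers (T U : finType) (f : T -> U) (A : pred T) :
  (\sum_u #|[set t | (f t == u) && A t]| = #|[set t | A t]|)%N.
Proof.
rewrite -!sum1_card (partition_big f predT) //=; apply: eq_bigr => u _.
by rewrite sum1_card; apply: eq_card => t; rewrite inE unfold_in /= inE andbC.
Qed.

Lemma sum_agree_except (R : comPzRingType) (I : finType) (i0 : I) (f g D : I -> R) :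
  (forall i, i != i0 -> f i = g i) ->
  \sum_i f i * D i = \sum_i g i * D i + (f i0 - g i0) * D i0.
Proof.
move=> f_eq_g; rewrite (bigD1 i0) // [in RHS](bigD1 i0) //=.
by rewrite (eq_bigr (fun i => g i * D i)) => [|i /f_eq_g ->]; first ring.
Qed.

Lemma card_ord_le (n : nat) (A : {pred 'I_n}) : (#|A| <= n)%N.
Proof. by rewrite -[X in (_ <= X)%N](card_ord n) max_card. Qed.

Lemma natr_card_set (R : pzSemiRingType) (T : finType) (b : pred T) :
  (#|[set t | b t]|%:R : R) = \sum_t (b t)%:R.
Proof.
by rewrite -sum1_card natr_sum big_mkcond; apply: eq_bigr => t _; rewrite inE; case: (b t).
Qed.

Lemma natr_card_setI (R : pzSemiRingType) (T : finType) (a b : pred T) :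
  (#|[set t | a t && b t]|%:R : R) = \sum_(t | a t) (b t)%:R.
Proof.
rewrite -sum1_card natr_sum big_mkcond [RHS]big_mkcond /=; apply: eq_bigr => t _.
by rewrite inE; case: (a t); case: (b t).
Qed.

Lemma sum_ffun_prod_marginal (R : comPzRingType) (I J : finType) (Q : I -> J -> R)
    (j : I) (s' : J) :
  (forall i, \sum_t Q i t = 1) ->
  \sum_(f : {ffun I -> J}) (\prod_i Q i (f i)) * (f j == s')%:R = Q j s'.
Proof.
move=> Q_sum1.
pose Qj i t := Q i t * (if i == j then (t == s')%:R else 1).
transitivity (\sum_(f : {ffun I -> J}) \prod_i Qj i (f i)).
  apply: eq_bigr => f _; rewrite (bigD1 j) //= [in RHS](bigD1 j) //= /Qj eqxx.
  rewrite mulrAC; congr (_ * _).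
  by apply: eq_bigr => i /negbTE ->; rewrite mulr1.
rewrite -bigA_distr_bigA (bigD1 j) //= [X in _ * X]big1 ?mulr1.
  rewrite /Qj eqxx (bigD1 s') //= eqxx mulr1 big1 ?addr0 // => t /negbTE ->.
  by rewrite mulr0.
by move=> i /negbTE i_neq_j; rewrite /Qj i_neq_j; under eq_bigr do rewrite mulr1.
Qed.

Section NArmedTransition.
Variables (R : archiRealFieldType) (S : finType) (P : S -> bool -> S -> R).
Variables (N : nat) (x : config S N).

Lemma sum_zcount : (\sum_s zcount x s = N)%N.
Proof.
rewrite -[RHS](card_ord N) -cardsT -(sum_card_fibers x predT).
by apply: eq_bigr => s _; apply: eq_card => i; rewrite !inE andbT.
Qed.

Lemma sum_nactive_in (u : actvec N) : (\sum_s nactive_in x u s = nactive u)%N.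
Proof. exact: sum_card_fibers. Qed.

Lemma sum_Xfrac : (0 < N)%N -> \sum_s Xfrac x s = 1 :> R.
Proof.
by move=> N_gt0; rewrite -mulr_suml -natr_sum sum_zcount divff // pnatr_eq0 -lt0n.
Qed.

Lemma sum_P_by_counts (u : actvec N) (s' : S) :
  \sum_i P (x i) (u i) s'
  = \sum_s (zcount x s)%:R * P s false s'
    + \sum_s (nactive_in x u s)%:R * (P s true s' - P s false s').
Proof.
rewrite (partition_big x predT) //= -big_split /=; apply: eq_bigr => s _.
rewrite (eq_bigr (fun i => P s false s' + (u i)%:R * (P s true s' - P s false s'))).
  rewrite big_split /= sumr_const -mulr_suml /nactive_in natr_card_setI mulr_natl.
  by congr (_ *+ _ + _); apply: eq_card => i; rewrite inE.
move=> i /eqP <-; case: (u i); rewrite /= ?mul1r ?mul0r ?addr0 //.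
by rewrite addrC subrK.
Qed.

Definition mean_active (pi : actvec N -> R) (s : S) : R :=
  \sum_u pi u * (nactive_in x u s)%:R.

Lemma sum_mean_active (pi : actvec N -> R) :
  \sum_s mean_active pi s = \sum_u pi u * (nactive u)%:R.
Proof.
rewrite exchange_big /=; apply: eq_bigr => u _.
by rewrite -mulr_sumr -natr_sum sum_nactive_in.
Qed.

Hypothesis P_stochastic : stochastic P.

Lemma expected_Xfrac_given_actions (u : actvec N) (s' : S) :
  \sum_(x' : config S N) trans_prob P x u x' * Xfrac x' s'
  = (\sum_i P (x i) (u i) s') / N%:R.
Proof.
rewrite /Xfrac /zcount; under eq_bigr do rewrite natr_card_set mulrA mulr_sumr.
rewrite -big_distrl /= exchange_big /=; congr (_ / _); apply: eq_bigr => j _.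
by apply: (sum_ffun_prod_marginal (Q := fun i => P (x i) (u i))) => i; case: P_stochastic.
Qed.

Lemma expected_next_by_active_counts (pi : actvec N -> R) (s' : S) :
  \sum_u pi u = 1 ->
  expected_next P x pi s'
  = (\sum_s (zcount x s)%:R * P s false s'
     + \sum_s mean_active pi s * (P s true s' - P s false s')) / N%:R.
Proof.
move=> pi_sum1; rewrite /expected_next.
under eq_bigr do rewrite expected_Xfrac_given_actions sum_P_by_counts mulrA.
rewrite -mulr_suml; congr (_ / _).
under eq_bigr do rewrite mulrDr.
rewrite big_split /= -mulr_suml pi_sum1 mul1r; congr (_ + _).
under eq_bigr do rewrite mulr_sumr.
rewrite exchange_big /=; apply: eq_bigr => s _.
by rewrite /mean_active mulr_suml; apply: eq_bigr => u _; rewrite mulrA.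
Qed.

End NArmedTransition.

Section StationaryPolicy.
Variables (R : archiRealFieldType) (S : finType) (P : S -> bool -> S -> R).
Variables (alpha : R) (y : S -> bool -> R).

Lemma pibar_false s : pibar y false s = 1 - pibar y true s.
Proof.
by rewrite /pibar; case: ifP => [/lt0r_neq0 ? |_]; field.
Qed.

Lemma Ppibar_split s s' :
  Ppibar P y s s' = P s false s' + pibar y true s * (P s true s' - P s false s').
Proof. by rewrite /Ppibar big_bool /= pibar_false; ring. Qed.

Lemma mustar_pibar s a : (forall b, 0 <= y s b) -> mustar y s * pibar y a s = y s a.
Proof.
move=> y_ge0; rewrite /mustar /pibar; case: ifP => [/lt0r_neq0 ?|]; first by field.
rewrite lt_neqAle addr_ge0 // andbT eq_sym paddr_eq0 // => /negbFE/andP[/eqP y0 /eqP y1].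
by case: a; rewrite ?y0 ?y1 addr0 mul0r.
Qed.

Hypothesis y_feasible : lp_feasible P alpha y.

Lemma sum_mustar : \sum_s mustar y s = 1.
Proof.
by case: y_feasible => _ _ _ <-; apply: eq_bigr => s _; rewrite big_bool /= addrC.
Qed.

Lemma sum_mustar_pibar_true : \sum_s mustar y s * pibar y true s = alpha.
Proof.
case: y_feasible => y_ge0 <- _ _; apply: eq_bigr => s _.
by rewrite mustar_pibar.
Qed.

Lemma sum_mustar_Ppibar s' : \sum_s mustar y s * Ppibar P y s s' = mustar y s'.
Proof.
case: y_feasible => y_ge0 _ stationary _.
have -> : mustar y s' = \sum_a y s' a by rewrite big_bool /= addrC.
rewrite -stationary; apply: eq_bigr => s _.
by rewrite /Ppibar mulr_sumr; apply: eq_bigr => a _; rewrite mulrA mustar_pibar.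
Qed.

Lemma sum_centered_Phi (st : S) (X : S -> R) (s' : S) : \sum_s X s = 1 ->
  \sum_s (X s - mustar y s) * Phi P y alpha st s s'
  = \sum_s X s * Ppibar P y s s' - mustar y s'
    - (\sum_s X s * pibar y true s - alpha) * (P st true s' - P st false s').
Proof.
move=> X_sum1; set D := P st true s' - P st false s'; set mu' := mustar y s'.
have expand s : (X s - mustar y s) * Phi P y alpha st s s'
    = X s * Ppibar P y s s' + (-1) * (mustar y s * Ppibar P y s s')
      + (alpha * D - mu') * X s + (mu' - alpha * D) * mustar y s
      + (- D) * (X s * pibar y true s) + D * (mustar y s * pibar y true s).
  by rewrite /Phi -/mu' -/D; ring.
rewrite (eq_bigr _ (fun s _ => expand s)) !big_split /= -!mulr_sumr.
rewrite X_sum1 sum_mustar sum_mustar_pibar_true sum_mustar_Ppibar -/mu'; ring.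
Qed.
End StationaryPolicy.

Section OptimalLocalControl.
Variables (R : archiRealFieldType) (S : finType) (alpha : R) (y : S -> bool -> R).
Variables (st : S) (N : nat) (x : config S N) (pi : actvec N -> R).
Hypothesis y_ge0 : forall s a, 0 <= y s a.
Hypothesis mixed_only_st : forall s, 0 < y s false -> 0 < y s true -> s = st.
Hypothesis pi_OLC : OLC_law y alpha x pi.

Lemma mean_active_const s k :
  (forall u, pi u != 0 -> nactive_in x u s = k) -> mean_active x pi s = k%:R.
Proof.
case: pi_OLC => -[_ pi_sum1] _ _ _ const_k.
rewrite /mean_active -[k%:R]mul1r -pi_sum1 mulr_suml; apply: eq_bigr => u _.
by case: (eqVneq (pi u) 0) => [->|/const_k ->]; rewrite ?mul0r.
Qed.

Lemma mean_active_pure s :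
  s != st -> mean_active x pi s = pibar y true s * (zcount x s)%:R.
Proof.
move=> s_neq_st; case: pi_OLC => _ in_support _ half_in_empty.
have [yt_gt0 | yt_le0] := ltP 0 (y s true).
  have yf0 : y s false = 0.
    apply/eqP; rewrite eq_le y_ge0 andbT leNgt; apply: contra s_neq_st => yf_gt0.
    by apply/eqP; apply: mixed_only_st.
  rewrite /pibar yf0 add0r yt_gt0 divff ?gt_eqF // mul1r.
  apply: mean_active_const => u /in_support active; apply: eq_card => i.
  rewrite !inE; case: eqP => //= xi_s.
  by apply: (proj1 (active i)); rewrite /Splus xi_s yt_gt0 yf0 eqxx.
have yt0 : y s true = 0 by apply/eqP; rewrite eq_le yt_le0 y_ge0.
have [yf_gt0 | yf_le0] := ltP 0 (y s false).
  rewrite /pibar yt0 addr0 yf_gt0 mul0r mul0r.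
  apply: (mean_active_const (k := 0%N)) => u /in_support passive; apply: eq_card0 => i.
  rewrite !inE; case: eqP => //= xi_s.
  by apply: (proj2 (passive i)); rewrite /Sminus xi_s yt0 yf_gt0 eqxx.
have yf0 : y s false = 0 by apply/eqP; rewrite eq_le yf_le0 y_ge0.
rewrite /pibar yt0 yf0 addr0 ltxx mul1r mulrC.
apply: (expectation_rround (M := N)) => [u||k].
- exact: card_ord_le.
- rewrite divr_ge0 ?ler0n //= ler_pdivrMr // (le_trans _ (ler_peMr _ _)) ?ler0n ?ler1n //.
  by rewrite ler_nat card_ord_le.
- by apply: half_in_empty; rewrite /Sempty yt0 yf0 eqxx.
Qed.

Lemma sum_mean_active_OLC : 0 <= alpha <= 1 -> \sum_s mean_active x pi s = alpha * N%:R.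
Proof.
case/andP=> alpha_ge0 alpha_le1; case: pi_OLC => _ _ active_law _.
rewrite sum_mean_active; apply: (expectation_rround (M := N)) => // [u|].
  exact: card_ord_le.
by rewrite mulr_ge0 ?ler0n //= ler_piMl ?ler0n.
Qed.

Lemma sum_mean_active_weighted (D : S -> R) : 0 <= alpha <= 1 ->
  \sum_s mean_active x pi s * D s
  = \sum_s pibar y true s * (zcount x s)%:R * D s
    + (alpha * N%:R - \sum_s pibar y true s * (zcount x s)%:R) * D st.
Proof.
move/sum_mean_active_OLC; set c_z := fun s => pibar y true s * (zcount x s)%:R.
have agree s : s != st -> mean_active x pi s = c_z s by exact: mean_active_pure.
under eq_bigr do rewrite -[mean_active _ _ _]mulr1.
rewrite (sum_agree_except _ agree) (sum_agree_except _ agree) => <-.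
by under [X in _ + (X + _ - _) * _]eq_bigr do rewrite mulr1; ring.
Qed.

Lemma expected_next_OLC (P : S -> bool -> S -> R) (s' : S) :
  stochastic P -> 0 <= alpha <= 1 -> (0 < N)%N ->
  expected_next P x pi s'
  = \sum_s Xfrac x s * Ppibar P y s s'
    - (\sum_s Xfrac x s * pibar y true s - alpha) * (P st true s' - P st false s').
Proof.
move=> P_stochastic alpha_01 N_gt0; have [[_ pi_sum1] _ _ _] := pi_OLC.
rewrite expected_next_by_active_counts // sum_mean_active_weighted // /Xfrac.
under [in RHS]eq_bigr do rewrite Ppibar_split mulrAC mulrDr mulrA [_ * pibar _ _ _]mulrC.
under [X in _ = _ - (X - _) * _]eq_bigr do rewrite mulrAC [_ * pibar _ _ _]mulrC.
rewrite -!mulr_suml big_split /=; field.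
by rewrite pnatr_eq0 -lt0n.
Qed.

End OptimalLocalControl.

(* Only the uniqueness half of Assumption 2 enters; the OLC condition guarantees
   that OLC can be carried out, but here its law [pi] is given directly. *)
Theorem lemma1 (R : archiRealFieldType) (S : finType)
    (P : S -> bool -> S -> R) (r : S -> bool -> R) (alpha : R)
    (ystar : S -> bool -> R) (stilde : S) (N : nat)
    (x : config S N) (pi : actvec N -> R) :
  stochastic P ->
  0 < alpha < 1 ->
  (0 < N)%N ->
  (exists K : nat, alpha * N%:R = K%:R) ->
  lp_optimal P r alpha ystar ->
  (* Assumption 2 *)
  0 < ystar stilde false -> 0 < ystar stilde true ->
  (forall s, 0 < ystar s false -> 0 < ystar s true -> s = stilde) ->
  olc_condition ystar alpha stilde x ->
  OLC_law ystar alpha x pi ->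
  forall s' : S,
    expected_next P x pi s' - mustar ystar s'
    = \sum_(s : S) (Xfrac x s - mustar ystar s) * Phi P ystar alpha stilde s s'.
Proof.
move=> P_stochastic /andP[alpha_gt0 alpha_lt1] N_gt0 _ [y_feasible _] _ _ mixed_only_st _
  pi_OLC s'.
have y_ge0 : forall s a, 0 <= ystar s a by case: y_feasible.
have alpha_01 : 0 <= alpha <= 1 by rewrite !ltW.
rewrite (expected_next_OLC y_ge0 mixed_only_st pi_OLC) // sum_centered_Phi ?sum_Xfrac //.
by rewrite addrAC.
Qed.
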